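(* Let $L\ge2$ and $0\le p<1$, and let $(\eta_n)_{n\ge0}$ be the Markov chain on $\{0,1\}^L$ with transition function $Q$, started from the stationary distribution $\pi(\omega)=Z^{-1}\prod_{j=0}^{|\omega|-1}c_j/c_{L-j-1}$. Then $$\mathbb E_\pi[\eta_0(0)\eta_1(0)]-\frac14=\frac{2p-1}{4\big(2L(1-p)+2p-1\big)}.$$
   Context: $\Omega=\{0,1\}^L$, $\omega=(\omega(0),\dots,\omega(L-1))$, $|\omega|=\sum_j\omega(j)$. The transition function $Q$ is $Q\big(\eta,(\eta(1),\dots,\eta(L-1),s)\big)=\frac1L\big(|\eta|p+(L-|\eta|)(1-p)\big)$ for $s=1$, $=\frac1L\big((L-|\eta|)p+|\eta|(1-p)\big)$ for $s=0$, and $Q(\eta,\omega)=0$ otherwise. $c_j=(1-p)(1-\frac jL)+\frac jLp$ and $Z$ is a normalizing constant; this $\pi$ is stationary for $Q$. *)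

From HB Require Import structures.
From mathcomp Require Import all_boot all_order all_algebra.
Set Implicit Arguments. Unset Strict Implicit. Unset Printing Implicit Defensive.
Import Order.TTheory GRing.Theory Num.Theory.
Local Open Scope ring_scope.

Definition config (L : nat) := {ffun 'I_L -> bool}.

(* omega(k) for a natural-number index k (false outside 0..L-1; never used there) *)
Definition at_ (L : nat) (w : config L) (k : nat) : bool :=
  if insub k is Some i then w i else false.

Definition ones (L : nat) (w : config L) : nat := (\sum_(i < L) w i)%N.

Section Chain.
Variable R : realFieldType.

Definition cc (L : nat) (p : R) (j : nat) : R :=
  (1 - p) * (1 - j%:R / L%:R) + j%:R / L%:R * p.

Definition Q (L : nat) (p : R) (eta w : config L) : R :=
  if [forall j : 'I_L, (j.+1 < L)%N ==> (w j == at_ eta j.+1)] then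
    (if at_ w L.-1
     then (L%:R)^-1 * ((ones eta)%:R * p + (L - ones eta)%:R * (1 - p))
     else (L%:R)^-1 * ((L - ones eta)%:R * p + (ones eta)%:R * (1 - p)))
  else 0.

Definition wt (L : nat) (p : R) (w : config L) : R :=
  \prod_(j < ones w) (cc L p j / cc L p (L - j - 1)).

Definition pi (L : nat) (p : R) (w : config L) : R :=
  wt p w / \sum_(v : config L) wt p v.

(* E_pi[eta_0(0) eta_1(0)] for the chain started at pi *)
Definition corr (L : nat) (p : R) : R :=
  \sum_(eta : config L) \sum_(w : config L)
     pi p eta * Q p eta w * (nat_of_bool (at_ eta 0))%:R * (nat_of_bool (at_ w 0))%:R.

End Chain.

From Pilot Require Import Defs.
From HB Require Import structures.
From mathcomp Require Import all_boot all_order all_algebra ring lra zify.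
Set Implicit Arguments. Unset Strict Implicit. Unset Printing Implicit Defensive.
Import Order.TTheory GRing.Theory Num.Theory.
Local Open Scope ring_scope.

(* Since eta_1(0) = eta_0(1), the correlation is E_pi[w(0) w(1)]; as pi depends on w
   only through K = |w|, this is E[K(K-1)] / (L(L-1)) under the law
   nu(k) ~ C(L,k) prod_(j<k) c_j / c_(L-j-1) of K.  The ratio nu(k+1)/nu(k) is the
   detailed-balance ratio of the birth-death chain jumping k -> k+1 at rate (L-k) c_k
   and k -> k-1 at rate k c_(L-k), so sum_k nu(k) (A g)(k) = 0 for its generator A and
   every g.  Taking g(k) = k gives E K = L/2, and then g(k) = k^2 gives E K^2. *)

Definition config_cons (n : nat) (b : bool) (v : config n) : config n.+1 :=
  [ffun i : 'I_n.+1 => if unlift ord0 i is Some j then v j else b].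

Lemma config_cons0 n b (v : config n) : config_cons b v ord0 = b.
Proof. by rewrite ffunE unlift_none. Qed.

Lemma config_consS n b (v : config n) j : config_cons b v (lift ord0 j) = v j.
Proof. by rewrite ffunE liftK. Qed.

Lemma ones_config_cons n b (v : config n) : ones (config_cons b v) = (b + ones v)%N.
Proof.
rewrite /ones big_ord_recl config_cons0; congr (_ + _)%N.
by apply: eq_bigr => i _; rewrite config_consS.
Qed.

Lemma ones_le L (w : config L) : (ones w <= L)%N.
Proof.
rewrite -[X in (_ <= X)%N]card_ord -sum1_card.
by apply: leq_sum => i _; apply: leq_b1.
Qed.

Lemma at_ord L (w : config L) (i : 'I_L) : at_ w i = w i.
Proof. by rewrite /at_ valK. Qed.

Lemma at_config_cons0 n b (v : config n) : at_ (config_cons b v) 0 = b.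
Proof. by rewrite (at_ord _ ord0) config_cons0. Qed.

Lemma at_config_consS n b (v : config n) k : at_ (config_cons b v) k.+1 = at_ v k.
Proof.
rewrite /at_; case: insubP => [i ki vi|kn]; case: insubP => [j kj vj|kn'] //.
- by rewrite (_ : i = lift ord0 j) ?config_consS //; apply: val_inj; rewrite /= vi vj.
- by rewrite ltnS in ki; rewrite ki in kn'.
- by rewrite -ltnS in kj; rewrite kj in kn.
Qed.

Lemma sum_config_cons (R : nmodType) n (F : config n.+1 -> R) :
  \sum_(w : config n.+1) F w = \sum_(b : bool) \sum_(v : config n) F (config_cons b v).
Proof.
rewrite pair_big /= (reindex (fun bv : bool * config n => config_cons bv.1 bv.2)) /=.
  by apply: eq_bigl => -[].
exists (fun w : config n.+1 => (w ord0, [ffun j => w (lift ord0 j)])).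
  move=> [b v] _ /=; rewrite config_cons0; congr (_, _).
  by apply/ffunP => j; rewrite ffunE config_consS.
move=> w _; apply/ffunP => i; rewrite ffunE.
by case: (unliftP ord0 i) => [j ->|->]; rewrite ?ffunE.
Qed.

Lemma sum_config_ones (R : pzSemiRingType) n (h : nat -> R) :
  \sum_(v : config n) h (ones v) = \sum_(k < n.+1) 'C(n, k)%:R * h k.
Proof.
elim: n h => [|n IH] h.
  rewrite big_ord1 bin0 mul1r (eq_bigr (fun _ => h 0%N)) => [|v _]; last by rewrite /ones big_ord0.
  by rewrite sumr_const card_ffun card_bool card_ord expn0.
rewrite sum_config_cons big_bool /=.
under [X in X + _ = _]eq_bigr => v _ do rewrite ones_config_cons.
under [X in _ + X = _]eq_bigr => v _ do rewrite ones_config_cons.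
rewrite (IH (fun k => h k.+1)) IH [RHS]big_ord_recl bin0 mul1r.
under [X in _ = _ + X]eq_bigr => i _ do rewrite lift0 binS natrD mulrDl.
rewrite big_split /= [X in _ + X = _]big_ord_recl bin0 mul1r.
rewrite [X in _ = _ + (X + _)]big_ord_recr /= bin_small // mul0r addr0.
by rewrite addrCA [X in _ + X = _]addrC.
Qed.

Lemma sum_config_at01_ones (R : pzSemiRingType) n (h : nat -> R) :
  \sum_(w : config n.+2) (at_ w 0 : nat)%:R * (at_ w 1 : nat)%:R * h (ones w)
  = \sum_(k < n.+1) 'C(n, k)%:R * h k.+2.
Proof.
rewrite -(sum_config_ones n (fun k => h k.+2)) sum_config_cons big_bool /=.
rewrite [X in _ + X]big1 ?addr0 => [|v _]; last by rewrite at_config_cons0 !mul0r.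
rewrite sum_config_cons big_bool /= [X in _ + X]big1 ?addr0 => [|v _]; last first.
  by rewrite at_config_consS !at_config_cons0 mulr0 mul0r.
apply: eq_bigr => v _.
by rewrite at_config_cons0 at_config_consS at_config_cons0 !ones_config_cons !mul1r.
Qed.

Definition shift_in n (e : config n.+1) (s : bool) : config n.+1 :=
  [ffun j : 'I_n.+1 => if (j.+1 < n.+1)%N then at_ e j.+1 else s].

Lemma at_shift_in_last n (e : config n.+1) s : at_ (shift_in e s) n = s.
Proof. by rewrite (at_ord _ ord_max) ffunE /= ltnn. Qed.

Lemma shift_in_inj n (e : config n.+1) : injective (shift_in e).
Proof. by move=> s t est; rewrite -(at_shift_in_last e s) est at_shift_in_last. Qed.

Lemma shift_in_spec n (e w : config n.+1) :
  [forall j : 'I_n.+1, (j.+1 < n.+1)%N ==> (w j == at_ e j.+1)] = (w == shift_in e (at_ w n)).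
Proof.
apply/forallP/eqP => [hw|-> j]; last by rewrite ffunE; apply/implyP => ->.
apply/ffunP => j; rewrite ffunE; case: ifP => hj.
  by move/implyP: (hw j) => /(_ hj) /eqP.
by rewrite -(at_ord w) (_ : j = n :> nat) //; move: (ltn_ord j) hj; lia.
Qed.

Section Transition.
Variables (R : realFieldType) (n : nat) (p : R).

Lemma Q_outside (e w : config n.+1) :
  (forall s, w != shift_in e s) -> Q p e w = 0.
Proof. by move=> hw; rewrite /Q shift_in_spec (negbTE (hw _)). Qed.

Lemma sum_Q_shift_in (e : config n.+1) (F : config n.+1 -> R) :
  \sum_w Q p e w * F w = \sum_(s : bool) Q p e (shift_in e s) * F (shift_in e s).
Proof.
rewrite big_bool (bigD1 (shift_in e true)) // (bigD1 (shift_in e false)) /=; last first.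
  by rewrite (inj_eq (@shift_in_inj _ e)).
rewrite big1 ?addr0 // => w /andP[wt wf].
by rewrite Q_outside ?mul0r // => -[].
Qed.

Lemma sum_Q_shift_in_eq1 (e : config n.+1) : \sum_(s : bool) Q p e (shift_in e s) = 1.
Proof.
rewrite big_bool /Q !shift_in_spec !at_shift_in_last !eqxx /=.
by rewrite natrB ?ones_le //; field; rewrite nat1r pnatr_eq0.
Qed.

End Transition.

Lemma at_shift_in0 n (e : config n.+2) s : at_ (shift_in e s) 0 = at_ e 1.
Proof. by rewrite (at_ord _ ord0) ffunE. Qed.

Lemma sum_Q_at0 (R : realFieldType) n (p : R) (e : config n.+2) :
  \sum_w Q p e w * (at_ w 0 : nat)%:R = (at_ e 1 : nat)%:R.
Proof.
rewrite sum_Q_shift_in.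
under eq_bigr => s _ do rewrite at_shift_in0.
by rewrite -mulr_suml sum_Q_shift_in_eq1 mul1r.
Qed.

Section BirthDeath.
Variables (R : realFieldType) (L : nat) (p : R).
Hypotheses (L_gt0 : (0 < L)%N) (p_ge0 : 0 <= p) (p_lt1 : p < 1).

Definition wt_ones (k : nat) : R := \prod_(j < k) (cc L p j / cc L p (L - j - 1)).

Definition nu (k : nat) : R := 'C(L, k)%:R * wt_ones k.

Definition birth (k : nat) : R := (L - k)%:R * cc L p k.

Definition death (k : nat) : R := k%:R * cc L p (L - k).

Definition generator (g : nat -> R) (k : nat) : R :=
  birth k * (g k.+1 - g k) - death k * (g k - g k.-1).

Definition moment (m : nat) : R := \sum_(k < L.+1) nu k * k%:R ^+ m.

Lemma cc_gt0 j : (j < L)%N -> 0 < cc L p j.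
Proof.
move=> jL; rewrite /cc.
have L_pos : 0 < L%:R :> R by rewrite ltr0n.
have t_ge0 : 0 <= j%:R / L%:R :> R by rewrite divr_ge0 ?ler0n // ltW.
have t_lt1 : j%:R / L%:R < 1 :> R by rewrite ltr_pdivrMr // mul1r ltr_nat.
have : 0 < (1 - p) * (1 - j%:R / L%:R) by rewrite mulr_gt0 // subr_gt0.
have : 0 <= j%:R / L%:R * p by rewrite mulr_ge0.
lra.
Qed.

Lemma wt_ones_ge0 k : (k <= L)%N -> 0 <= wt_ones k.
Proof.
move=> kL; apply: prodr_ge0 => j _.
by rewrite divr_ge0 // ltW // cc_gt0 //; move: (ltn_ord j); lia.
Qed.

Lemma moment0_gt0 : 0 < moment 0.
Proof.
rewrite /moment big_ord_recl expr0 mulr1 {1}/nu bin0 {1}/wt_ones big_ord0 mulr1.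
rewrite (lt_le_trans ltr01) // lerDl sumr_ge0 // => k _.
by rewrite expr0 mulr1 mulr_ge0 ?ler0n ?wt_ones_ge0 // -ltnS ltn_ord.
Qed.

Lemma nu_balance k : (k < L)%N -> nu k.+1 * death k.+1 = nu k * birth k.
Proof.
move=> kL; have c_neq0 : cc L p (L - k.+1) != 0 by rewrite gt_eqF ?cc_gt0 //; lia.
have binR : k.+1%:R * 'C(L, k.+1)%:R = (L - k)%:R * 'C(L, k)%:R :> R.
  by rewrite -!natrM mul_bin_left.
rewrite /nu /death /birth /wt_ones big_ord_recr /= subn1 -subnS.
rewrite [LHS](_ : _ = k.+1%:R * 'C(L, k.+1)%:R * wt_ones k * cc L p k); last first.
  by rewrite /wt_ones; field.
by rewrite binR /wt_ones; ring.
Qed.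

Lemma sum_nu_generator (g : nat -> R) : \sum_(k < L.+1) nu k * generator g k = 0.
Proof.
have birthL : birth L = 0 by rewrite /birth subnn mul0r.
have death0 : death 0 = 0 by rewrite /death mul0r.
under eq_bigr => k _ do rewrite /generator mulrBr.
rewrite sumrB big_ord_recr big_ord_recl /= birthL death0 !mul0r !mulr0 addr0 add0r.
apply/eqP; rewrite subr_eq0; apply/eqP/eq_bigr => k _.
rewrite /bump add1n add0n !mulrA; congr (_ * _).
by have := nu_balance (ltn_ord k); rewrite /death /birth !mulrA => ->.
Qed.

Lemma generator_natr k : (k <= L)%N ->
  generator (fun k => k%:R) k = (1 - p) * (L%:R - 2 * k%:R).
Proof.
have L_neq0 : L%:R != 0 :> R by rewrite pnatr_eq0 -lt0n.
case: k => [|k] kL; rewrite /generator /birth /death /cc ?natrB //=; first by field.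
by rewrite -[k.+2%:R]natr1 -natr1; field.
Qed.

Lemma generator_natr_sqr k : (k <= L)%N ->
  generator (fun k => k%:R ^+ 2) k =
  (1 - p) * L%:R + 2 * ((1 - p) * L%:R + 2 * p - 1) * k%:R
  - (4 * (1 - p) + 2 * (2 * p - 1) / L%:R) * k%:R ^+ 2.
Proof.
have L_neq0 : L%:R != 0 :> R by rewrite pnatr_eq0 -lt0n.
case: k => [|k] kL; rewrite /generator /birth /death /cc ?natrB //=; first by field.
by rewrite -[k.+2%:R]natr1 -natr1; field.
Qed.

Lemma sum_nu_quadratic a b c :
  \sum_(k < L.+1) nu k * (a + b * k%:R + c * k%:R ^+ 2) =
  a * moment 0 + b * moment 1 + c * moment 2.
Proof.
rewrite /moment !mulr_sumr -!big_split; apply: eq_bigr => k _ /=.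
by move: (nu k) (k%:R) => x y; ring.
Qed.

Lemma moment1 : moment 1 = L%:R / 2 * moment 0.
Proof.
have : \sum_(k < L.+1) nu k * ((1 - p) * L%:R + (- 2 * (1 - p)) * k%:R + 0 * k%:R ^+ 2) = 0.
  rewrite -[RHS](sum_nu_generator (fun k => k%:R)); apply: eq_bigr => k _.
  rewrite generator_natr; last by rewrite -ltnS.
  by move: (nu k) (k%:R) => x y; ring.
rewrite sum_nu_quadratic => E.
have a_neq0 : 1 - p != 0 by rewrite subr_eq0 gt_eqF.
by apply: (mulfI a_neq0); lra.
Qed.

Lemma corr_denom_gt0 : 0 < 2 * L%:R * (1 - p) + 2 * p - 1.
Proof.
have : 1 <= L%:R :> R by rewrite ler1n.
have : 0 < 1 - p by rewrite subr_gt0.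
nra.
Qed.

Lemma moment2 :
  moment 2 =
  L%:R ^+ 2 * ((1 - p) * L%:R + p) / (2 * (2 * L%:R * (1 - p) + 2 * p - 1)) * moment 0.
Proof.
have D_gt0 := corr_denom_gt0.
have L_neq0 : L%:R != 0 :> R by rewrite pnatr_eq0 -lt0n.
set b := 2 * ((1 - p) * L%:R + 2 * p - 1).
set c := 4 * (1 - p) + 2 * (2 * p - 1) / L%:R.
have : \sum_(k < L.+1) nu k * ((1 - p) * L%:R + b * k%:R + (- c) * k%:R ^+ 2) = 0.
  rewrite -[RHS](sum_nu_generator (fun k => k%:R ^+ 2)); apply: eq_bigr => k _.
  rewrite generator_natr_sqr; last by rewrite -ltnS.
  by move: (nu k) (k%:R) => x y; rewrite /b /c; ring.
rewrite sum_nu_quadratic moment1 => E.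
have c_neq0 : c != 0.
  rewrite /c (_ : _ + _ = 2 * (2 * L%:R * (1 - p) + 2 * p - 1) / L%:R); last by field.
  by rewrite !mulf_neq0 ?invr_eq0 // gt_eqF.
have -> : moment 2 = ((1 - p) * L%:R + b * (L%:R / 2)) * moment 0 / c.
  by apply: (mulIf c_neq0); rewrite divfK //; lra.
by rewrite /b /c; field; rewrite L_neq0 !gt_eqF //; lra.
Qed.

End BirthDeath.

Lemma bin_falling2 n k : ('C(n.+2, k.+2) * (k.+2 * k.+1) = n.+2 * n.+1 * 'C(n, k))%N.
Proof.
have := mul_bin_diag n.+1 k; have := mul_bin_diag n.+2 k.+1; rewrite /=.
nia.
Qed.

Lemma moment_falling (R : realFieldType) n (p : R) :
  moment n.+2 p 2 - moment n.+2 p 1 =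
  n.+2%:R * n.+1%:R * \sum_(k < n.+1) 'C(n, k)%:R * wt_ones n.+2 p k.+2.
Proof.
rewrite /moment -sumrB 2!big_ord_recl /= !expr1 expr0n mulr0 subrr add0r.
rewrite expr1n mulr1 subrr add0r mulr_sumr; apply: eq_bigr => k _.
have -> : bump 0 (bump 0 k) = k.+2 by [].
have sqr_sub : k.+2%:R ^+ 2 - k.+2%:R ^+ 1 = k.+2%:R * k.+1%:R :> R.
  by rewrite -[k.+2%:R]natr1; ring.
have binR := congr1 (fun m => m%:R : R) (bin_falling2 n k); rewrite /= !natrM in binR.
by rewrite /nu -mulrBr sqr_sub mulrAC binR -!mulrA.
Qed.

Lemma corr_eq (R : realFieldType) n (p : R) :
  corr n.+2 p = (\sum_(k < n.+1) 'C(n, k)%:R * wt_ones n.+2 p k.+2) / moment n.+2 p 0.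
Proof.
have Z_eq : \sum_(v : config n.+2) wt p v = moment n.+2 p 0.
  by rewrite (sum_config_ones n.+2 (wt_ones n.+2 p)); apply: eq_bigr => k _; rewrite expr0 mulr1.
rewrite /corr -sum_config_at01_ones mulr_suml; apply: eq_bigr => e _.
rewrite -[(at_ e 1 : nat)%:R](sum_Q_at0 p e) mulr_sumr !mulr_suml; apply: eq_bigr => w _.
rewrite /Defs.pi Z_eq; change (wt p e) with (wt_ones n.+2 p (ones e)).
by move: (wt_ones _ _ _) (moment _ _ _) (Q _ _ _) => x m q; ring.
Qed.

Lemma corr_closed_form (R : realFieldType) n (p : R) : 0 <= p -> p < 1 ->
  corr n.+2 p = ((1 - p) * n.+2%:R + 2 * p - 1) / (2 * (2 * n.+2%:R * (1 - p) + 2 * p - 1)).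
Proof.
move=> p_ge0 p_lt1; have L_gt0 : (0 < n.+2)%N by [].
have m0_gt0 := moment0_gt0 L_gt0 p_ge0 p_lt1.
have D_gt0 := corr_denom_gt0 L_gt0 p_lt1.
have nn1_neq0 : n.+2%:R * n.+1%:R != 0 :> R by rewrite mulf_neq0 ?pnatr_eq0.
rewrite corr_eq -[\sum_(k < _) _](mulKf nn1_neq0) -moment_falling.
rewrite (moment2 L_gt0) // (moment1 L_gt0) // -[n.+2%:R]natr1 -[n.+1%:R]natr1.
by field; rewrite !natr1 !pnatr_eq0 !gt_eqF.
Qed.

Theorem mainTheorem16 (R : realFieldType) (L : nat) (p : R)
  (hL : (2 <= L)%N) (hp0 : 0 <= p) (hp1 : p < 1) :
  corr L p - 1 / 4 =
  (2 * p - 1) / (4 * (2 * L%:R * (1 - p) + 2 * p - 1)).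
Proof.
case: L hL => [|[|n]] // _.
have D_gt0 := corr_denom_gt0 (isT : (0 < n.+2)%N) hp1.
by rewrite corr_closed_form //; field; rewrite -(natrD R 2 n) gt_eqF.
Qed.
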